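(* Let $\mathbb{T}$ be a time scale and $\alpha\in(0,1]$. Suppose $f:\mathbb{T}\to\mathbb{R}$ is strictly increasing, $\tilde{\mathbb{T}}:=\mathrm{Ran}(f)$ is a time scale, and $f$ is continuously nabla fractional differentiable of order $1$ at each point of $\mathbb{T}^k$. If $f^{-1}:\tilde{\mathbb{T}}\to\mathbb{T}$ exists, then for $t\in\tilde{\mathbb{T}}^k$ with $\big(\nabla^{(1)}f\big)(f^{-1}(t))\neq 0$, $$\nabla^{(\alpha)}f^{-1}(t)=\begin{cases}\dfrac{(\nu(t))^{1-\alpha}}{\big(\nabla^{(1)}f\big)(f^{-1}(t))} & \text{if } \alpha\neq 1,\\[2ex] \dfrac{1}{\big(\nabla^{(1)}f\big)(f^{-1}(t))} & \text{if } \alpha=1,\end{cases}$$ where $\nu$ and $\nabla^{(\alpha)}f^{-1}$ are computed on the time scale $\tilde{\mathbb{T}}$ and $\nabla^{(1)}f$ on $\mathbb{T}$.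
   Context: A time scale is a nonempty closed subset of $\mathbb{R}$ with the relative topology. On a time scale $\mathbb{S}$, for $t\in\mathbb{S}$: $\rho(t)=\sup\{s\in\mathbb{S}:s<t\}$, $\sigma(t)=\inf\{s\in\mathbb{S}:s>t\}$, $\nu(t)=t-\rho(t)$. If $\mathbb{S}$ has a minimum $m$ with $\sigma(m)>m$ then $\mathbb{S}^k=\mathbb{S}\setminus\{m\}$, else $\mathbb{S}^k=\mathbb{S}$. $U_\delta(t)=(t-\delta,t+\delta)\cap\mathbb{S}$, $U^-_\delta(t)=(t-\delta,t)\cap\mathbb{S}$. Let $Q=\{1/q: q \text{ an odd positive integer}\}$; for $\alpha\in Q$, $x^\alpha$ is the real $q$-th root. Definition: $h:\mathbb{S}\to\mathbb{R}$ is nabla fractional differentiable of order $\alpha$ at $t\in\mathbb{S}^k$ if there is $L\in\mathbb{R}$ such that for every $\varepsilon>0$ there is $\delta>0$ with $|[h(\rho(t))-h(s)]-L[\rho(t)-s]^\alpha|\le\varepsilon|\rho(t)-s|^\alpha$ for all $s\in U_\delta(t)$ if $\alpha\in Q$, resp. all $s\in U^-_\delta(t)$ if $\alpha\notin Q$; then $\nabla^{(\alpha)}h(t):=L$. ''Continuously nabla fractional differentiable of order $1$ at each point of $\mathbb{T}^k$'' means nabla fractional differentiable of order $1$ at every point of $\mathbb{T}^k$ with $\nabla^{(1)}f$ continuous there. *)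

From HB Require Import structures.
From mathcomp Require Import all_boot all_order all_algebra.
From mathcomp Require Import all_classical all_reals all_analysis.
Set Implicit Arguments. Unset Strict Implicit. Unset Printing Implicit Defensive.
Import Order.TTheory GRing.Theory Num.Theory.
Import numFieldNormedType.Exports.
Local Open Scope classical_set_scope.
Local Open Scope ring_scope.

Section TimeScale.
Variable R : realType.

Definition time_scale (S : set R) : Prop := S !=set0 /\ closed S.

(* backward jump: sup{s in S | s < t}, with the standard convention
   sup (empty) := t (i.e. rho(min S) = min S) *)
Definition rho (S : set R) (t : R) : R :=
  if `[< exists s, S s /\ s < t >] then sup [set s | S s /\ s < t] else t.

Definition sigma (S : set R) (t : R) : R :=
  if `[< exists s, S s /\ t < s >] then inf [set s | S s /\ t < s] else t.

Definition nu (S : set R) (t : R) : R := t - rho S t.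

Definition is_min (S : set R) (m : R) : Prop := S m /\ forall s, S s -> m <= s.

Definition Tk (S : set R) : set R :=
  [set t | S t /\ ~ (is_min S t /\ t < sigma S t)].

Definition U (S : set R) (d t : R) : set R := [set s | S s /\ t - d < s < t + d].
Definition Um (S : set R) (d t : R) : set R := [set s | S s /\ t - d < s < t].

Definition inQ (a : R) : Prop := exists q : nat, odd q /\ a = (q%:R)^-1.

(* x^a : for a = 1/q in Q, the real q-th root (sign(x) * |x|^(1/q));
   otherwise the usual power (only used on nonnegative arguments) *)
Definition fpow (a x : R) : R :=
  if `[< inQ a >] then Num.sg x * powR `|x| a else powR x a.

Definition nabla_frac_deriv (S : set R) (a : R) (h : R -> R) (t L : R) : Prop :=
  Tk S t /\
  forall eps : R, 0 < eps -> exists2 d : R, 0 < d &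
    forall s, (if `[< inQ a >] then U S d t s else Um S d t s) ->
      `| (h (rho S t) - h s) - L * fpow a (rho S t - s) |
        <= eps * fpow a `|rho S t - s|.

Definition cont_on (A : set R) (g : R -> R) : Prop :=
  forall t, A t -> forall eps : R, 0 < eps -> exists2 d : R, 0 < d &
    forall s, A s -> `|s - t| < d -> `|g s - g t| < eps.

End TimeScale.

(** Write [t = f x].  Nabla differentiability makes [f] left continuous at [x], so
    the backward jump commutes with [f]: [rho~ t = f (rho x)].  A strictly
    increasing function on a closed set has a continuous inverse.
    - If [rho x = x], then [rho~ t = t], and the linear approximation of [f] at [x]
      gives [|f^-1 s - x| <= 2 |s - t| / |f'(x)|] near [t]; this yields the
      derivative [1 / f'(x)] for [alpha = 1], and [0 = nu~(t)^(1-alpha) / f'(x)]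
      for [alpha < 1] since [|s - t| = o(|s - t|^alpha)].
    - If [rho x < x], then [f'(x)] is the secant slope [nu~(t) / nu(x)].  For
      [alpha] outside [Q] the left neighbourhoods of [t] in [f(T)] are eventually
      empty; for [alpha] in [Q] only points [s = f y] with [y >= x] come near [t],
      and the error [f^-1(rho~ t) - f^-1 s - L (rho~ t - s)^alpha] tends to [0]
      while [(s - rho~ t)^alpha >= nu~(t)^alpha] stays away from [0]. *)

From HB Require Import structures.
From mathcomp Require Import all_boot all_order all_algebra.
From mathcomp Require Import all_classical all_reals all_analysis.
From mathcomp Require Import ring lra.
Import Order.TTheory GRing.Theory Num.Theory.
Import numFieldNormedType.Exports.
Local Open Scope classical_set_scope.
Local Open Scope ring_scope.

Set Implicit Arguments.
Unset Strict Implicit.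
Unset Printing Implicit Defensive.

Section ClosedSubsets.
Variables (R : realType) (T : set R).
Hypothesis closedT : closed T.

Lemma closed_sup (E : set R) : E `<=` T -> E !=set0 -> has_ubound E -> T (sup E).
Proof. by move=> ET E0 ubE; apply/closedT/(closureS ET)/closure_sup. Qed.

Lemma closed_inf (E : set R) : E `<=` T -> E !=set0 -> has_lbound E -> T (inf E).
Proof.
move=> ET E0 lbE; apply/closedT/(closureS ET) => B /nbhs_ballP[_ /posnumP[e] infeU].
have [y Ey ye] := inf_adherent (gt0 e) (conj E0 lbE).
have infy : inf E <= y by exact: ge_inf.
exists y; split => //; apply: infeU.
rewrite /ball /= ler0_norm ?subr_le0 //; lra.
Qed.

End ClosedSubsets.

Section JumpOperators.
Variable R : realType.
Implicit Types (S : set R) (s t : R).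

Lemma rho_le S t : rho S t <= t.
Proof.
rewrite /rho; case: asboolP => [[s [Ss st]]|//].
by apply: ge_sup => [|z [_ /ltW]]; first by exists s.
Qed.

Lemma rho_eqVlt S t : rho S t = t \/ rho S t < t.
Proof. by apply/predU1P; rewrite -le_eqVlt rho_le. Qed.

Lemma le_rho S s t : S s -> s < t -> s <= rho S t.
Proof.
move=> Ss st; rewrite /rho asboolT; last by exists s.
by apply: sup_upper_bound => //; split; [exists s | exists t => z [_ /ltW]].
Qed.

Lemma rho_mem S t : closed S -> S t -> S (rho S t).
Proof.
move=> closedS St; rewrite /rho; case: asboolP => [[s [Ss st]]|//].
by apply: closed_sup => [//|_ []//||]; [exists s | exists t => z [_ /ltW]].
Qed.

Lemma nabla_frac_deriv_notQ_left_scattered S (a : R) (h : R -> R) t L :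
  ~ inQ a -> Tk S t -> rho S t < t -> nabla_frac_deriv S a h t L.
Proof.
move=> Qa Tkt rt; split=> // e e0; exists (t - rho S t); first by rewrite subr_gt0.
move=> s; rewrite asboolF // => -[Ss /andP[rs st]].
have := le_rho Ss st; move: rs; lra.
Qed.

End JumpOperators.

Lemma lipschitz_of_linear_approx (R : realFieldType) (p q D eps : R) :
  `|p - D * q| <= eps * `|q| -> 2 * eps <= `|D| -> `|D| * `|q| <= 2 * `|p|.
Proof.
move=> approx epsD; have := ler_normB p (p - D * q); rewrite opprB addrC subrK.
rewrite normrM => tri; have := normr_ge0 q; nra.
Qed.

Section Powers.
Variable R : realType.
Implicit Types a b k w z : R.

Lemma inQ1 : inQ (1 : R).
Proof. by exists 1%N; rewrite invr1. Qed.

Lemma fpow1 z : fpow 1 z = z.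
Proof. by rewrite /fpow asboolT; [rewrite powRr1 // -numEsg | exact: inQ1]. Qed.

Lemma fpow_norm a z : 0 < a -> fpow a `|z| = `|z| `^ a.
Proof.
move=> a0; rewrite /fpow; case: asboolP => // _.
rewrite normr_id sgr_norm; have [->|z0] := eqVneq z 0; last by rewrite mul1r.
by rewrite normr0 powR0 ?mulr0 // gt_eqF.
Qed.

Lemma fpow_lt0 a z : inQ a -> z < 0 -> fpow a z = - (- z) `^ a.
Proof. by move=> Qa z0; rewrite /fpow asboolT // ltr0_sg // ltr0_norm // mulN1r. Qed.

Lemma le_mul_powR_near0 a k : a < 1 -> 0 < k ->
  exists2 d, 0 < d & forall b, 0 <= b < d -> b <= k * b `^ a.
Proof.
move=> a1 k0; have a1' : 0 < 1 - a by rewrite subr_gt0.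
exists (k `^ (1 - a)^-1); first exact: powR_gt0.
move=> b /andP[]; rewrite le_eqVlt => /predU1P[<- _|b0 bd].
  by rewrite mulr_ge0 ?powR_ge0 // ltW.
have bE : b = b `^ a * b `^ (1 - a).
  rewrite -powRD; last by apply/implyP => _; rewrite gt_eqF.
  by rewrite addrC subrK powRr1 // ltW.
have kE : k = (k `^ (1 - a)^-1) `^ (1 - a).
  by rewrite -powRrM mulVf ?gt_eqF // powRr1 // ltW.
have bk : b `^ (1 - a) <= k.
  by rewrite [leRHS]kE ge0_ler_powR ?nnegrE ?powR_ge0 // ltW.
by rewrite [X in X <= _]bE mulrC ler_wpM2r ?powR_ge0.
Qed.

Lemma powR_sub_le a b w : 0 <= a <= 1 -> 0 < b <= w ->
  w `^ a - b `^ a <= b `^ a * (w - b) / b.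
Proof.
move=> /andP[a0 a1] /andP[b0 bw].
have q1 : 1 <= w / b by rewrite ler_pdivlMr // mul1r.
have wE : w = b * (w / b) by rewrite mulrC divfK ?gt_eqF.
have -> : b `^ a * (w - b) / b = b `^ a * (w / b - 1) by field; rewrite gt_eqF.
rewrite {1}wE (powRM _ (ltW b0) (le_trans ler01 q1)).
have := ler1_powR q1 a1; have := powR_ge0 b a; nra.
Qed.

(* [u, v, w] stand for [f (rho x), f x, f y], and [(x - r) / (v - u) `^ a] is the
   derivative [nu~(t)^(1-a) / f'(x)] rewritten with the secant slope. *)
Lemma secant_powR_estimate (a e r x y u v w : R) : 0 < a <= 1 -> r < x <= y -> u < v <= w ->
  y - x < e * (v - u) `^ a -> (x - r) / (v - u) * (w - v) < e * (v - u) `^ a ->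
  `|r - y + (x - r) / (v - u) `^ a * (w - u) `^ a| <= e * (w - u) `^ a.
Proof.
move=> /andP[a0 a1] /andP[rx xy] /andP[uv vw] yx wv.
have P0 : 0 < (v - u) `^ a by rewrite powR_gt0 // subr_gt0.
have PW : (v - u) `^ a <= (w - u) `^ a.
  by rewrite ge0_ler_powR ?nnegrE ?(ltW a0) // ?lerD2r; lra.
have growth : (w - u) `^ a - (v - u) `^ a <= (v - u) `^ a * (w - v) / (v - u).
  rewrite (_ : w - v = w - u - (v - u)); last by ring.
  by rewrite powR_sub_le ?(ltW a0) // subr_gt0 uv lerD2r.
set A := (x - r) / (v - u) `^ a * ((w - u) `^ a - (v - u) `^ a).
have A0 : 0 <= A by rewrite mulr_ge0 ?divr_ge0 ?subr_ge0 // ltW.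
have A_le : A <= (x - r) / (v - u) * (w - v).
  rewrite (_ : _ / (v - u) * _ = (x - r) / (v - u) `^ a * ((v - u) `^ a * (w - v) / (v - u))).
    by rewrite ler_wpM2l // divr_ge0 ?subr_ge0 // ltW.
  by field; rewrite !gt_eqF ?subr_gt0.
have -> : r - y + (x - r) / (v - u) `^ a * (w - u) `^ a = A - (y - x).
  by rewrite /A mulrBr mulfVK ?gt_eqF //; ring.
have ePW : e * (v - u) `^ a <= e * (w - u) `^ a.
  by rewrite ler_wpM2l // -(pmulr_lge0 _ P0); lra.
by rewrite ler_norml; apply/andP; split; lra.
Qed.

End Powers.

Definition left_continuous_at (R : realType) (S : set R) (g : R -> R) (t : R) :=
  forall e, 0 < e -> exists2 d, 0 < d &
    forall s, S s -> t - d < s < t -> `|g s - g t| < e.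

Section StrictlyIncreasing.
Variables (R : realType) (T : set R) (f : R -> R).
Implicit Types x y e : R.
Hypothesis incr : forall x y, T x -> T y -> x < y -> f x < f y.

Lemma incr_le x y : T x -> T y -> x <= y -> f x <= f y.
Proof. by move=> Tx Ty; rewrite le_eqVlt => /predU1P[->//|/(incr Tx Ty)/ltW]. Qed.

Lemma incr_lt_reflect x y : T x -> T y -> f x < f y -> x < y.
Proof. by move=> Tx Ty; apply: contraLR; rewrite -!leNgt; exact: incr_le. Qed.

Hypothesis closedT : closed T.

Lemma incr_gap_right x e : T x -> 0 < e ->
  exists2 d, 0 < d & forall y, T y -> x + e <= y -> f x + d <= f y.
Proof.
move=> Tx e0; pose B := [set y | T y /\ x + e <= y].
have [[y0 By0]|B0] := pselect (B !=set0); last first.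
  by exists 1 => // y Ty ye; exfalso; apply: B0; exists y.
have lbB : has_lbound B by exists (x + e) => y [].
have TinfB : T (inf B) by apply: closed_inf => // [y []|]; last exists y0.
have le_infB : x + e <= inf B by apply: lb_le_inf => [|y []//]; exists y0.
exists (f (inf B) - f x); first by rewrite subr_gt0 incr //; lra.
move=> y Ty ye; have : f (inf B) <= f y by rewrite incr_le // ge_inf.
lra.
Qed.

Lemma incr_gap_left x e : T x -> 0 < e ->
  exists2 d, 0 < d & forall y, T y -> y <= x - e -> f y <= f x - d.
Proof.
move=> Tx e0; pose B := [set y | T y /\ y <= x - e].
have [[y0 By0]|B0] := pselect (B !=set0); last first.
  by exists 1 => // y Ty ye; exfalso; apply: B0; exists y.
have ubB : has_ubound B by exists (x - e) => y [].
have TsupB : T (sup B) by apply: closed_sup => // [y []|]; last exists y0.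
have supB_le : sup B <= x - e by apply: ge_sup => [|y []//]; exists y0.
exists (f x - f (sup B)); first by rewrite subr_gt0 incr //; lra.
move=> y Ty ye; have : f y <= f (sup B).
  by apply: incr_le => //; apply: sup_upper_bound => //; split=> //; exists y0.
lra.
Qed.

Lemma incr_inverse_cont x e : T x -> 0 < e ->
  exists2 d, 0 < d & forall y, T y -> `|f y - f x| < d -> `|y - x| < e.
Proof.
move=> Tx e0; have [dR dR0 gapR] := incr_gap_right Tx e0.
have [dL dL0 gapL] := incr_gap_left Tx e0.
exists (Num.min dL dR) => [|y Ty]; first by rewrite lt_min dL0.
rewrite lt_min !ltr_distlC => /andP[/andP[? ?] /andP[? ?]].
apply/andP; split.
- by have [/(gapR _ Ty)|] := leP (x + e) y; lra.
- by have [/(gapL _ Ty)|] := leP y (x - e); lra.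
Qed.

Lemma Tk_of_image x : T x -> Tk (f @` T) (f x) -> Tk T x.
Proof.
move=> Tx [_ notmin]; split=> // -[[_ minx] xsx]; apply: notmin; split.
  by split=> [|_ [y Ty <-]]; [exists x | rewrite incr_le ?minx].
move: xsx; rewrite /sigma; case: asboolP => [[s0 [Ts0 xs0]]|_]; last by rewrite ltxx.
set A := [set s | T s /\ x < s] => xinfA.
have fs0 : [set s | (f @` T) s /\ f x < s] (f s0) by split; [exists s0 | exact: incr].
have lbA : has_lbound A by exists x => y [_ /ltW].
have TinfA : T (inf A) by apply: closed_inf => // [y []|]; last exists s0.
rewrite asboolT; last by exists (f s0).
apply: (lt_le_trans (incr Tx TinfA xinfA)); apply: lb_le_inf; first by exists (f s0).
move=> _ [[y Ty <-] fxy]; rewrite incr_le // ge_inf //.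
by split=> //; apply: incr_lt_reflect.
Qed.

Lemma rho_image x : T x -> left_continuous_at T f x ->
  rho (f @` T) (f x) = f (rho T x).
Proof.
move=> Tx fcont.
have [[s [Ts sx]]|noleft] := pselect (exists s, T s /\ s < x); last first.
  rewrite /rho (asboolF noleft) asboolF // => -[_ [[y Ty <-] fyx]].
  by apply: noleft; exists y; split=> //; apply: incr_lt_reflect.
have fs : [set z | (f @` T) z /\ z < f x] (f s) by split; [exists s | exact: incr].
rewrite {1}/rho asboolT; last by exists (f s).
set B := [set z | (f @` T) z /\ z < f x] in fs *.
have supB : has_sup B by split; [exists (f s) | exists (f x) => z [_ /ltW]].
have Tr : T (rho T x) by apply: rho_mem.
apply/le_anti/andP; split.
  apply: ge_sup => [|_ [[y Ty <-] fyx]]; first by exists (f s).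
  by apply: incr_le => //; apply: le_rho => //; exact: incr_lt_reflect.
have [rx|rx] := rho_eqVlt T x; last first.
  by apply: sup_upper_bound => //; split; [exists (rho T x) | exact: incr].
rewrite rx; apply/ler_addgt0Pr => e e0.
have [d d0 fd] := fcont e e0.
have supA : sup [set y | T y /\ y < x] = x by move: rx; rewrite /rho asboolT //; exists s.
have hasA : has_sup [set y | T y /\ y < x] by split; [exists s | exists x => y [_ /ltW]].
have [y [Ty yx]] := sup_adherent d0 hasA; rewrite supA => xy.
have : f y <= sup B by apply: sup_upper_bound => //; split; [exists y | exact: incr].
have := fd y Ty; rewrite xy yx ltr_distlC => /(_ isT) /andP[_ ?]; lra.
Qed.

End StrictlyIncreasing.

Section NablaDerivativeOrderOne.
Variables (R : realType) (T : set R) (f : R -> R) (x D : R).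
Hypothesis fD : nabla_frac_deriv T 1 f x D.

Lemma nabla_deriv1_approx e : 0 < e -> exists2 d, 0 < d & forall s, T s ->
  `|s - x| < d -> `|f (rho T x) - f s - D * (rho T x - s)| <= e * `|rho T x - s|.
Proof.
move=> e0; have [_ /(_ e e0)[d d0 fd]] := fD; exists d => // s Ts sx.
have := fd s; rewrite asboolT ?fpow1; last exact: inQ1.
by apply; split=> //; rewrite -ltr_distlC distrC.
Qed.

Lemma nabla_deriv1_rho : T x -> f (rho T x) - f x = D * (rho T x - x).
Proof.
move=> Tx; apply/eqP; rewrite -subr_eq0 -normr_le0.
apply/ler_addgt0Pr => e e0; rewrite add0r.
have c0 : 0 < `|rho T x - x| + 1 by rewrite ltr_pwDr.
have [d d0 /(_ x Tx)] := nabla_deriv1_approx (divr_gt0 e0 c0).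
rewrite subrr normr0 => /(_ d0) /le_trans; apply.
by rewrite mulrAC ler_pdivrMr // ler_wpM2l ?lerDl // ltW.
Qed.

Lemma nabla_deriv1_left_cont : left_continuous_at T f x.
Proof.
move=> e e0; have [rx|rx] := rho_eqVlt T x; last first.
  exists (x - rho T x) => [|s Ts /andP[rs sx]]; first by rewrite subr_gt0.
  by have := le_rho Ts sx; lra.
have [d d0 fd] := nabla_deriv1_approx ltr01.
have c0 : 0 < `|D| + 1 by rewrite ltr_pwDr.
exists (Num.min d (e / (`|D| + 1))) => [|s Ts]; first by rewrite lt_min d0 divr_gt0.
rewrite ltrBlDr -ltrBlDl lt_min ltr_pdivlMr // => /andP[/andP[sd sk] sx].
have xs0 : 0 < x - s by rewrite subr_gt0.
have := fd s Ts; rewrite rx mul1r (distrC s) (gtr0_norm xs0) => /(_ sd) approx.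
have := ler_normD (f x - f s - D * (x - s)) (D * (x - s)).
rewrite subrK normrM (gtr0_norm xs0) distrC; nra.
Qed.

End NablaDerivativeOrderOne.

Definition inverse_nabla_deriv (R : realType) (a nu D : R) : R :=
  if a != 1 then nu `^ (1 - a) / D else 1 / D.

Lemma inverse_nabla_deriv_secant (R : realType) (a h nu D : R) :
  0 < nu -> nu = D * h -> inverse_nabla_deriv a nu D = h / nu `^ a.
Proof.
move=> nu0 nuE; have D0 : D != 0 by apply: contraTneq nu0 => D0; rewrite nuE D0 mul0r ltxx.
have P0 : nu `^ a != 0 by rewrite gt_eqF ?powR_gt0.
have -> : h = nu `^ (1 - a) * nu `^ a / D.
  rewrite -powRD; last by apply/implyP => _; rewrite gt_eqF.
  by rewrite subrK (powRr1 (ltW nu0)) nuE; field.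
rewrite /inverse_nabla_deriv; case: eqVneq => [a1|_] /=; last by field; rewrite P0 D0.
by rewrite {1}a1 subrr powRr0; field; rewrite P0 D0.
Qed.

Section InverseFunction.
Variables (R : realType) (T : set R) (f finv : R -> R) (a x D : R).
Hypotheses (closedT : closed T) (incr : forall x y, T x -> T y -> x < y -> f x < f y).
Hypotheses (finvK : forall y, T y -> finv (f y) = y) (Tx : T x).
Hypotheses (fD : nabla_frac_deriv T 1 f x D) (D0 : D != 0) (a01 : 0 < a <= 1).
Hypothesis TkS : Tk (f @` T) (f x).

Lemma nabla_frac_deriv_inverse r L : T r -> rho (f @` T) (f x) = f r ->
  (forall e, 0 < e -> exists2 d, 0 < d & forall y, T y -> `|f y - f x| < d ->
     `|r - y - L * fpow a (f r - f y)| <= e * fpow a `|f r - f y|) ->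
  nabla_frac_deriv (f @` T) a finv (f x) L.
Proof.
move=> Tr rhoS approx; split=> // e e0; have [d d0 fd] := approx e e0.
exists d => // s; rewrite rhoS finvK //.
case: asboolP => _ [[y Ty <-]] /andP[? ?]; rewrite finvK //; apply: fd => //;
  by rewrite ltr_distlC; apply/andP; split; lra.
Qed.

Lemma inverse_approx_left_dense e : rho T x = x -> 0 < e ->
  exists2 d, 0 < d & forall y, T y -> `|f y - f x| < d ->
    `|f x - f y - D * (x - y)| <= e * `|x - y|.
Proof.
move=> rx e0; have [d1 d10 fd] := nabla_deriv1_approx fD e0.
have [d d0 cont] := incr_inverse_cont incr closedT Tx d10.
by exists d => // y Ty /(cont _ Ty) /(fd _ Ty); rewrite rx.
Qed.

Lemma nabla_inverse_left_dense : rho T x = x ->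
  nabla_frac_deriv (f @` T) a finv (f x) (inverse_nabla_deriv a (nu (f @` T) (f x)) D).
Proof.
move=> rx; have rhoS : rho (f @` T) (f x) = f x.
  by rewrite (rho_image incr closedT Tx (nabla_deriv1_left_cont fD)) rx.
have Dn : 0 < `|D| by rewrite normr_gt0.
rewrite /nu rhoS subrr /inverse_nabla_deriv.
apply: (nabla_frac_deriv_inverse Tx rhoS) => e e0.
have k0 : 0 < e * `|D| / 2 by rewrite divr_gt0 ?mulr_gt0.
have [->|a1] := eqVneq a 1.
- pose eps := Num.min (`|D| / 2) (e * `|D| ^+ 2 / 2).
  have eps0 : 0 < eps by rewrite lt_min !divr_gt0 ?mulr_gt0 ?exprn_gt0.
  have eps1 : eps <= `|D| / 2 by rewrite ge_min lexx.
  have eps2 : eps <= e * `|D| ^+ 2 / 2 by rewrite ge_min lexx orbT.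
  have [d d0 fd] := inverse_approx_left_dense rx eps0.
  exists d => // y Ty /(fd _ Ty) h; have lip := lipschitz_of_linear_approx h ltac:(lra).
  rewrite /= !fpow1 (_ : x - y - 1 / D * (f x - f y) = - (f x - f y - D * (x - y)) / D).
    rewrite normrM normrN normfV ler_pdivrMr //.
    have := ler_wpM2r (normr_ge0 (x - y)) eps2.
    have := ler_wpM2l (ltW k0) lip; nra.
  by field.
- have a_lt1 : a < 1 by rewrite lt_neqAle a1; case/andP: a01.
  have [d1 d10 small] := le_mul_powR_near0 a_lt1 k0.
  have [d2 d20 fd] := inverse_approx_left_dense rx (divr_gt0 Dn (ltr0Sn _ 1)).
  exists (Num.min d1 d2) => [|y Ty]; first by rewrite lt_min d10.
  rewrite lt_min => /andP[y1 y2].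
  rewrite powR0 /=; last by rewrite subr_eq0 eq_sym.
  rewrite !mul0r subr0 fpow_norm; last by case/andP: a01.
  have lip := lipschitz_of_linear_approx (fd _ Ty y2) ltac:(lra).
  rewrite (distrC (f x)) in lip *.
  have := small `|f y - f x|; rewrite normr_ge0 y1 => /(_ isT) b_le.
  rewrite -(ler_pM2l Dn); lra.
Qed.

Lemma nabla_inverse_left_scattered : rho T x < x ->
  nabla_frac_deriv (f @` T) a finv (f x) (inverse_nabla_deriv a (nu (f @` T) (f x)) D).
Proof.
set r := rho T x => rx; have Tr : T r by exact: rho_mem.
have rhoS : rho (f @` T) (f x) = f r.
  exact: (rho_image incr closedT Tx (nabla_deriv1_left_cont fD)).
have [Qa|Qa] := pselect (inQ a); last first.
  by apply: nabla_frac_deriv_notQ_left_scattered => //; rewrite rhoS incr.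
have nu0 : 0 < f x - f r by rewrite subr_gt0 incr.
have DE : f x - f r = D * (x - r).
  by rewrite -opprB (nabla_deriv1_rho fD Tx) -mulrN opprB.
have D_gt0 : 0 < D by rewrite -(pmulr_lgt0 _ (_ : 0 < x - r)) -?DE // subr_gt0.
rewrite /nu rhoS (inverse_nabla_deriv_secant _ nu0 DE).
set P := (f x - f r) `^ a; have P0 : 0 < P by exact: powR_gt0.
apply: (nabla_frac_deriv_inverse Tr rhoS) => e e0.
have [d1 d10 cont] := incr_inverse_cont incr closedT Tx (mulr_gt0 e0 P0).
exists (Num.min (f x - f r) (Num.min d1 (e * P * D))) => [|y Ty].
  by rewrite !lt_min nu0 d10 !mulr_gt0.
rewrite !lt_min => /and3P[yr /(cont _ Ty) yx yD].
have xy : x <= y.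
  rewrite leNgt; apply/negP => /(le_rho Ty) /(incr_le incr Ty Tr).
  by move: yr; rewrite ltr_distlC => /andP[? ?]; lra.
have fxy : f x <= f y by apply: (incr_le incr).
rewrite ger0_norm ?subr_ge0 // in yx; rewrite ger0_norm ?subr_ge0 // in yD.
have fry : 0 < f y - f r by lra.
rewrite fpow_lt0 // ?fpow_norm ?(andP a01).1 //; last by lra.
rewrite opprB (distrC (f r)) (gtr0_norm fry) mulrN opprK.
apply: secant_powR_estimate => //; first by rewrite rx.
  by rewrite -subr_gt0 nu0.
have -> : (x - r) / (f x - f r) = D^-1 by rewrite DE; field; rewrite D0 gt_eqF ?subr_gt0.
by rewrite mulrC ltr_pdivrMr.
Qed.

End InverseFunction.

Theorem mainTheorem9 (R : realType) (T : set R) (alpha : R) (f finv df : R -> R) :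
  time_scale T ->
  0 < alpha <= 1 ->
  (forall x y, T x -> T y -> x < y -> f x < f y) ->
  time_scale (f @` T) ->
  (forall t, Tk T t -> nabla_frac_deriv T 1 f t (df t)) ->
  cont_on (Tk T) df ->
  (forall x, T x -> finv (f x) = x) ->
  forall t, Tk (f @` T) t -> df (finv t) != 0 ->
    nabla_frac_deriv (f @` T) alpha finv t
      (if alpha != 1 then powR (nu (f @` T) t) (1 - alpha) / df (finv t)
       else 1 / df (finv t)).
Proof.
move=> [_ closedT] alpha01 incr _ fD _ finvK t Tkt.
case: (Tkt) => -[x Tx xt] _; subst t; rewrite finvK // => D0.
have fDx := fD x (Tk_of_image incr closedT Tx Tkt).
have [dense|scattered] := rho_eqVlt T x.
- exact: nabla_inverse_left_dense.
- exact: nabla_inverse_left_scattered.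
Qed.
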